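(* Let $p>q>1$ be relatively prime integers. Let $\mathbf{x}$ be a $\frac pq$-automatic sequence over a finite alphabet $B$ generated by a deterministic finite automaton with output $\mathcal{A}=(Q,q_0,A_p,\delta,\tau:Q\to B)$ with the following property: there exists an integer $h\ge0$ such that for all words $u,v\in L_{\frac pq}$ with $\mathrm{val}_{\frac pq}(u)\equiv\mathrm{val}_{\frac pq}(v)\pmod{q^h}$ and $\delta(q_0,u)\ne\delta(q_0,v)$, there exists a word $w\in u^{-1}L_{\frac pq}\cap A_p^{\le h}$ such that $\tau(\delta(q_0,uw))\ne\tau(\delta(q_0,vw))$. Then, in the tree $T(L_{\frac pq})$ decorated by $\mathbf{x}$, each factor in $F_h^\infty$ can be extended to at most one factor in $F^\infty_{h+1,w_{j,0}}$, for every $0\le j\le q-1$.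
   Context: $A_p=\{0,\ldots,p-1\}$; for $w=w_\ell\cdots w_0\in A_p^*$, $\mathrm{val}_{\frac pq}(w)=\sum_{i=0}^{\ell}\frac{w_i}{q}(\frac pq)^i$; $\mathrm{rep}_{\frac pq}(n)$ is the unique word not starting with $0$ of value $n$ ($\mathrm{rep}_{\frac pq}(0)=\varepsilon$); $L_{\frac pq}=\{\mathrm{rep}_{\frac pq}(n):n\ge0\}$; $w^{-1}L=\{u:wu\in L\}$. $\mathbf{x}$ is generated by $\mathcal{A}$ if $x_n=\tau(\delta(q_0,\mathrm{rep}_{\frac pq}(n)))$ for all $n$. $T(L_{\frac pq})$ is the tree whose nodes are the words of $L_{\frac pq}$, with an edge labeled $d$ from $w$ to $wd$ whenever both are in $L_{\frac pq}$; node $w$ is decorated by $x_{\mathrm{val}_{\frac pq}(w)}$. For $w\in L_{\frac pq}$, the factor $T[w,h]$ of height $h$ has domain $w^{-1}L_{\frac pq}\cap A_p^{\le h}$, with node $u$ decorated by $x_{\mathrm{val}_{\frac pq}(wu)}$; two factors of the same height are equal if they have the same domain and the same decorations. $F_h$ is the set of factors of height $h$; $F_h^\infty\subseteq F_h$ is the set of those equal to $T[w,h]$ for infinitely many $w\in L_{\frac pq}$. For a letter $a$, $F^\infty_{h,a}$ is the set of factors in $F^\infty_h$ whose radix-least word of length $h$ in the domain ends with $a$. A factor $U$ of height $h$ is extended to a factor $U'$ of height $h+1$ if the truncation of $U'$ to words of length at most $h$ (same decorations) equals $U$. For $0\le j\le q-1$, $w_j$ is the word listing in increasing order the letters $a\in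 A_p$ with $a\equiv -pj\pmod q$ (so that $(w_0,\ldots,w_{q-1})$ is the periodic labeled signature of $T(L_{\frac pq})$), and $w_{j,0}$ is its first letter. *)

From mathcomp Require Import all_boot all_order all_algebra.
Set Implicit Arguments. Unset Strict Implicit. Unset Printing Implicit Defensive.
Import Order.TTheory GRing.Theory Num.Theory.

Section RationalBase.
Variables (p q : nat).

(* Words w = w_l ... w_0 over A_p = {0,...,p-1}: the head of the list is the
   most significant letter w_l, the last element is w_0. *)
Definition word := seq 'I_p.

(* val_{p/q}(w) = sum_i w_i/q (p/q)^i, computed by Horner:
   val(w a) = val(w) * p/q + a/q. *)
Definition val (w : word) : rat :=
  foldl (fun acc (a : 'I_p) => acc * ((p%:R : rat) / (q%:R : rat)) + (a%:R : rat) / (q%:R : rat))%R 0%R w.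

(* the natural number n with val w = n, when val w is a natural number *)
Definition natval (w : word) : nat := `|numq (val w)|%N.

Definition no_leading_zero (w : word) : bool :=
  if w is a :: _ then nat_of_ord a != 0%N else true.

Definition is_rep (n : nat) (w : word) : bool :=
  no_leading_zero w && (val w == (n%:R : rat))%R.

(* w belongs to L_{p/q} = { rep(n) : n >= 0 }, i.e. w is rep(n) for some n
   (namely n = natval w). *)
Definition inL (w : word) : bool :=
  no_leading_zero w && (val w == ((natval w)%:R : rat))%R.

Variables (B Q : finType) (q0 : Q) (delta : Q -> 'I_p -> Q) (tau : Q -> B).

Definition deltaw (s : Q) (w : word) : Q := foldl delta s w.

Definition generated (x : nat -> B) : Prop :=
  forall (n : nat) (w : word), is_rep n w -> x n = tau (deltaw q0 w).

Definition aut_property (h : nat) : Prop :=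
  forall u v : word, inL u -> inL v ->
    natval u = natval v %[mod q ^ h] ->
    deltaw q0 u <> deltaw q0 v ->
    exists w : word, [/\ inL (u ++ w), (size w <= h)%N &
        tau (deltaw q0 (u ++ w)) <> tau (deltaw q0 (v ++ w))].

(* A factor (of some height) is represented by its decoration function:
   u |-> Some decoration if u is in the domain, None otherwise. *)
Definition factorT := word -> option B.

Definition feq (U V : factorT) : Prop := forall u, U u = V u.

Variable x : nat -> B.

(* T[w,h]: domain w^{-1}L ∩ A_p^{<=h}, node u decorated by x_{val(wu)} *)
Definition factor (w : word) (h : nat) : factorT :=
  fun u => if (size u <= h)%N && inL (w ++ u) then Some (x (natval (w ++ u))) else None.

(* U in F_h^infty: U equals T[w,h] for infinitely many w in L
   (the set of such w is not contained in any finite list) *)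
Definition in_Finf (h : nat) (U : factorT) : Prop :=
  ~ (exists s : seq word, forall w : word, inL w -> feq (factor w h) U -> w \in s).

(* lexicographic (= radix, for words of equal length) order *)
Fixpoint lexle (u v : seq nat) : bool :=
  match u, v with
  | [::], _ => true
  | _ :: _, [::] => false
  | a :: u', b :: v' => (a < b)%N || ((a == b) && lexle u' v')
  end.

Definition least_ends_with (h : nat) (a : nat) (U : factorT) : Prop :=
  exists u : word, [/\ size u = h, U u != None,
    (exists (s : word) (b : 'I_p), u = rcons s b /\ nat_of_ord b = a) &
    forall v : word, size v = h -> U v != None ->
      lexle (map (@nat_of_ord p) u) (map (@nat_of_ord p) v)].

Definition in_Finf_a (h : nat) (a : nat) (U : factorT) : Prop :=
  in_Finf h U /\ least_ends_with h a U.

Definition extends (h : nat) (U U' : factorT) : Prop :=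
  forall u : word, (size u <= h)%N -> U' u = U u.

End RationalBase.

Definition wj (p q j : nat) : seq nat := [seq a <- iota 0 p | q %| a + p * j].
Definition wj0 (p q j : nat) : nat := head 0%N (wj p q j).

From Pilot Require Import Defs.
From mathcomp Require Import all_boot all_order all_algebra.
From mathcomp Require Import ring.
From Stdlib Require Import Classical.
Set Implicit Arguments. Unset Strict Implicit. Unset Printing Implicit Defensive.
Import Order.TTheory GRing.Theory Num.Theory.

(* Pick nonempty representatives u, v of U1 = T[u,h+1] and U2 = T[v,h+1].
   Since U1 and U2 agree up to height h and every node of T(L_{p/q}) has a
   child, their radix-least words of length h+1 have the same prefix of
   length h; ending with the same letter, they coincide with some z, so uz
   and vz are both in L_{p/q}.  As val(uz) = val(u) (p/q)^|z| + val(z) and p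
   is prime to q, this gives val(u) = val(v) mod q^(h+1).  The hypothesis on
   the automaton then forces delta(q0,u) = delta(q0,v), for otherwise a word
   of length <= h would separate decorations which U1 and U2 share.  Finally
   the congruence mod q^(h+1) makes the domains of T[u,h+1] and T[v,h+1]
   equal, and equal states make their decorations equal.  Neither U being
   in F_h^infty nor the particular letter w_{j,0} plays any role. *)

Lemma eqn_modMr_coprime (k d m n : nat) : coprime k d ->
  m * k = n * k %[mod d] -> m = n %[mod d].
Proof.
move=> kd; wlog nm : m n / n <= m => [wlog_nm|].
  by case: (leqP n m) => [/wlog_nm|/ltnW/wlog_nm nm /esym /nm /esym].
move=> /eqP; rewrite !eqn_mod_dvd ?leq_mul2r ?nm ?orbT // -mulnBl.
by rewrite Gauss_dvdl 1?coprime_sym // -eqn_mod_dvd // => /eqP.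
Qed.

Lemma lexle_prefix (s1 s2 t1 t2 : seq nat) : size s1 = size s2 ->
  lexle (s1 ++ t1) (s2 ++ t2) -> lexle s1 s2.
Proof.
elim: s1 s2 => [|a s1 IH] [|b s2] //= [hs] /orP [-> //|/andP [-> /= H]].
by rewrite (IH _ hs H) orbT.
Qed.

Lemma lexle_anti (s1 s2 : seq nat) : lexle s1 s2 -> lexle s2 s1 -> s1 = s2.
Proof.
elim: s1 s2 => [|a s1 IH] [|b s2] //= /orP [lt_ab|/andP [/eqP-> le12]].
  by rewrite ltnNge (ltnW lt_ab) gtn_eqF.
by rewrite ltnn eqxx /= => le21; rewrite (IH s2 le12 le21).
Qed.

Lemma nlz_cat (p : nat) (u w : word p) : u != [::] ->
  no_leading_zero (u ++ w) = no_leading_zero u.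
Proof. by case: u. Qed.

Local Open Scope ring_scope.

Section RationalBase.
Variables (p q : nat).
Hypothesis q_gt0 : (0 < q)%N.

Local Notation ratio := ((p%:R : rat) / q%:R).

Let q_neq0 : (q%:R : rat) != 0. Proof. by rewrite pnatr_eq0 -lt0n. Qed.

Lemma val_rcons (w : word p) (a : 'I_p) :
  Defs.val q (rcons w a) = Defs.val q w * ratio + a%:R / q%:R.
Proof. by rewrite /Defs.val foldl_rcons. Qed.

Lemma val_cat (u w : word p) :
  Defs.val q (u ++ w) = Defs.val q u * ratio ^+ size w + Defs.val q w.
Proof.
elim/last_ind: w => [|w a IH]; first by rewrite cats0 expr0 mulr1 addr0.
by rewrite -rcons_cat !val_rcons IH size_rcons exprSr; ring.
Qed.

Lemma val_ge0 (w : word p) : 0 <= Defs.val q w.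
Proof.
elim/last_ind: w => [//|w a IH].
by rewrite val_rcons addr_ge0 ?mulr_ge0 ?invr_ge0.
Qed.

Lemma val_mulX_nat (w : word p) : Defs.val q w * q%:R ^+ size w \is a Num.nat.
Proof.
elim/last_ind: w => [|w a IH]; first by rewrite mul0r.
have -> : Defs.val q (rcons w a) * q%:R ^+ size (rcons w a)
    = Defs.val q w * q%:R ^+ size w * p%:R + a%:R * q%:R ^+ size w.
  by rewrite val_rcons size_rcons exprS; field.
by apply: rpredD; apply: rpredM; rewrite ?rpredX ?natr_nat.
Qed.

Lemma natval_natr (w : word p) (n : nat) : Defs.val q w = n%:R -> natval q w = n.
Proof. by rewrite /natval => ->; rewrite -[n%:R]/(n%:Z)%:Q numq_int. Qed.

Lemma inLE (w : word p) :
  inL q w = no_leading_zero w && (Defs.val q w \is a Num.nat).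
Proof.
rewrite /inL; case: no_leading_zero => //=.
apply/eqP/natrP => [-> | [n vn]]; first by exists (natval q w).
by rewrite (natval_natr vn).
Qed.

Lemma nat_val_belast (w : word p) (a : 'I_p) : coprime p q ->
  Defs.val q (rcons w a) \is a Num.nat -> Defs.val q w \is a Num.nat.
Proof.
move=> pq_coprime /natrP [m vm]; have /natrP [k vk] := val_mulX_nat w.
have qX_neq0 : (q%:R : rat) ^+ size w != 0 by rewrite expf_neq0.
have carry : (k * p + a * q ^ size w)%N = (q ^ (size w).+1 * m)%N.
  apply/eqP; rewrite -(eqr_nat rat) natrD !natrM !natrX -vk -vm val_rcons.
  by apply/eqP; rewrite exprS; field.
have : (q ^ size w %| k * p)%N.
  by rewrite -(dvdn_addl _ (dvdn_mull a (dvdnn _))) carry dvdn_mulr // dvdn_exp2l.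
rewrite Gauss_dvdl ?coprimeXl 1?coprime_sym // => /dvdnP [t kt].
apply/natrP; exists t; apply: (mulIf qX_neq0).
by rewrite vk kt natrM natrX.
Qed.

Lemma exists_nat_val_rcons (w : word p) : (q < p)%N ->
  Defs.val q w \is a Num.nat -> exists c : 'I_p, Defs.val q (rcons w c) \is a Num.nat.
Proof.
move=> q_lt_p /natrP [n vn].
pose r := ((q - (p * n) %% q) %% q)%N.
have r_lt_p : (r < p)%N by rewrite (ltn_trans _ q_lt_p) ?ltn_mod.
have /dvdnP [m em] : (q %| p * n + r)%N.
  by rewrite /dvdn -modnDm modn_mod modnDmr subnKC ?modnn // ltnW ?ltn_mod.
exists (Ordinal r_lt_p); apply/natrP; exists m; rewrite val_rcons vn /=.
by apply: (mulIf q_neq0); rewrite -natrM -em natrD natrM; field.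
Qed.

Lemma inL_belast (w : word p) (a : 'I_p) : coprime p q -> w != [::] ->
  inL q (rcons w a) -> inL q w.
Proof.
move=> pq_coprime w_nil; rewrite !inLE -cats1 nlz_cat // => /andP [-> /=].
by rewrite cats1; apply: nat_val_belast.
Qed.

Lemma exists_inL_rcons (w : word p) : (q < p)%N -> w != [::] ->
  inL q w -> exists c : 'I_p, inL q (rcons w c).
Proof.
move=> q_lt_p w_nil; rewrite inLE => /andP [nlz /(exists_nat_val_rcons q_lt_p) [c vc]].
by exists c; rewrite inLE -cats1 nlz_cat // nlz cats1.
Qed.

Lemma natval_eqmod_of_cat (u v z : word p) : coprime p q ->
  inL q u -> inL q v -> inL q (u ++ z) -> inL q (v ++ z) ->
  natval q u = natval q v %[mod q ^ size z].
Proof.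
move=> pq_coprime uL vL uzL vzL; have /natrP [k vk] := val_mulX_nat z.
have carry w : inL q w -> inL q (w ++ z) ->
    (natval q w * p ^ size z + k = natval q (w ++ z) * q ^ size z)%N.
  move=> /andP [_ /eqP vw] /andP [_ /eqP vwz]; apply/eqP.
  rewrite -(eqr_nat rat) natrD !natrM !natrX -vk -vw -vwz val_cat expr_div_n.
  by apply/eqP; field; rewrite expf_neq0.
apply: (@eqn_modMr_coprime (p ^ size z)); first by rewrite coprimeXl ?coprimeXr.
by apply/eqP; rewrite -(eqn_modDr k) carry // carry // !modnMl.
Qed.

Lemma val_cat_subr_int (u v w : word p) (n : nat) : inL q u -> inL q v ->
  natval q u = natval q v %[mod q ^ n] -> (size w <= n)%N ->
  Defs.val q (u ++ w) - Defs.val q (v ++ w) \is a Num.int.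
Proof.
move=> /andP [_ /eqP vu] /andP [_ /eqP vv] uv_mod w_le.
set a := (natval q u %/ q ^ n)%N; set b := (natval q v %/ q ^ n)%N.
have vuv : Defs.val q u - Defs.val q v = (a%:R - b%:R) * q%:R ^+ n.
  rewrite vu vv (divn_eq (natval q u) (q ^ n)) (divn_eq (natval q v) (q ^ n)) uv_mod.
  by rewrite !natrD !natrM natrX; ring.
have -> : Defs.val q (u ++ w) - Defs.val q (v ++ w)
    = (a%:R - b%:R) * (q ^ (n - size w) * p ^ size w)%:R.
  rewrite !val_cat opprD addrACA subrr addr0 -mulrBl vuv -{1}(subnK w_le).
  rewrite natrM !natrX exprD expr_div_n.
  by field; rewrite expf_neq0.
by rewrite rpredM ?rpredB ?natr_int.
Qed.

Lemma inL_cat_eqmod (u v w : word p) (n : nat) : u != [::] -> v != [::] ->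
  inL q u -> inL q v -> natval q u = natval q v %[mod q ^ n] -> (size w <= n)%N ->
  inL q (u ++ w) = inL q (v ++ w).
Proof.
move=> u_nil v_nil uL vL uv_mod w_le.
rewrite !inLE !nlz_cat // (andP uL).1 (andP vL).1 !natrEint !val_ge0 !andbT /=.
rewrite -[Defs.val q (u ++ w)](subrK (Defs.val q (v ++ w))) rpredDl //.
exact: val_cat_subr_int uL vL uv_mod w_le.
Qed.

End RationalBase.

Section DecoratedTree.
Variables (p q : nat) (B Q : finType) (q0 : Q) (delta : Q -> 'I_p -> Q).
Variables (tau : Q -> B) (x : nat -> B).
Hypotheses (q_gt0 : (0 < q)%N) (q_lt_p : (q < p)%N) (pq_coprime : coprime p q).
Hypothesis x_gen : generated q q0 delta tau x.

Lemma factor_neq_None (w z : word p) (H : nat) :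
  (factor q x w H z != None) = (size z <= H)%N && inL q (w ++ z).
Proof. by rewrite /factor; case: ifP. Qed.

(* The empty word must be avoided: at the root, membership in L_{p/q}
   depends on the leading letter, while below a nonempty u it does not. *)
Lemma in_Finf_rep (H : nat) (U : factorT p B) : in_Finf q x H U ->
  exists u : word p, [/\ inL q u, u != [::] & feq (factor q x u H) U].
Proof.
move=> U_inf; apply: NNPP => no_rep; apply: U_inf; exists [:: [::]] => w wL wU.
by rewrite mem_seq1; apply: contraT => w_nil; case: no_rep; exists w.
Qed.

Lemma least_ends_with_feq (H a : nat) (U V : factorT p B) :
  feq U V -> least_ends_with H a V -> least_ends_with H a U.
Proof.
move=> UV [z [zH Vz z_last z_least]]; exists z; split; rewrite ?UV //.
by move=> w wH; rewrite UV; apply: z_least.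
Qed.

Lemma least_word_belast_le (h : nat) (u v s t : word p) (b c : 'I_p) :
  u != [::] -> v != [::] ->
  (forall w, (size w <= h)%N -> factor q x u h.+1 w = factor q x v h.+1 w) ->
  size s = h -> size t = h -> inL q (u ++ rcons s b) ->
  (forall w, size w = h.+1 -> factor q x v h.+1 w != None ->
     lexle (map (@nat_of_ord p) (rcons t c)) (map (@nat_of_ord p) w)) ->
  lexle (map (@nat_of_ord p) t) (map (@nat_of_ord p) s).
Proof.
move=> u_nil v_nil agree sh th usbL t_least.
have cat_nil (w1 w2 : word p) : w1 != [::] -> w1 ++ w2 != [::] by case: w1.
(* s is a node of both trees at depth h, and every node has a child. *)
have usL : inL q (u ++ s).
  by rewrite -rcons_cat in usbL; exact: (inL_belast q_gt0 pq_coprime (cat_nil u s u_nil) usbL).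
have : factor q x v h.+1 s != None by rewrite -agree ?sh // factor_neq_None sh leqnSn.
rewrite factor_neq_None => /andP [_ vsL].
have [d vsdL] := exists_inL_rcons q_gt0 q_lt_p (cat_nil _ _ v_nil) vsL.
have := t_least (rcons s d); rewrite size_rcons sh factor_neq_None size_rcons sh.
rewrite leqnn -rcons_cat vsdL => /(_ erefl isT).
by rewrite !map_rcons -!cats1; apply: lexle_prefix; rewrite !size_map sh th.
Qed.

Lemma least_ends_with_common_word (h a : nat) (u v : word p) :
  u != [::] -> v != [::] ->
  (forall w, (size w <= h)%N -> factor q x u h.+1 w = factor q x v h.+1 w) ->
  least_ends_with h.+1 a (factor q x u h.+1) ->
  least_ends_with h.+1 a (factor q x v h.+1) ->
  exists z : word p, [/\ size z = h.+1, inL q (u ++ z) & inL q (v ++ z)].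
Proof.
move=> u_nil v_nil agree [z1 [z1h z1u [s [b [z1E b_a]]] s_least]].
move=> [z2 [z2h z2v [t [c [z2E c_a]]] t_least]]; subst z1 z2.
move: z1h z2h z1u z2v; rewrite !size_rcons !factor_neq_None.
move=> [sh] [th] /andP [_ usbL] /andP [_ vtcL].
have agree_vu w : (size w <= h)%N -> factor q x v h.+1 w = factor q x u h.+1 w.
  by move/agree.
have st : s = t.
  apply/(inj_map val_inj)/lexle_anti.
    exact: (least_word_belast_le v_nil u_nil agree_vu th sh vtcL s_least).
  exact: (least_word_belast_le u_nil v_nil agree sh th usbL t_least).
have bc : b = c by apply: val_inj; rewrite /= b_a c_a.
by exists (rcons s b); split; rewrite ?size_rcons ?sh // st bc.
Qed.

Lemma deltaw_eq_of_factor_agree (h H : nat) (u v : word p) :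
  aut_property q q0 delta tau h -> (h <= H)%N -> inL q u -> inL q v ->
  natval q u = natval q v %[mod q ^ h] ->
  (forall w, (size w <= h)%N -> factor q x u H w = factor q x v H w) ->
  deltaw delta q0 u = deltaw delta q0 v.
Proof.
move=> aut hH uL vL uv_mod agree.
have [//|/eqP uv_neq] := eqVneq (deltaw delta q0 u) (deltaw delta q0 v).
have [w [uwL wh separate]] := aut u v uL vL uv_mod uv_neq.
have := agree w wh; rewrite /factor (leq_trans wh hH) uwL /=.
case: ifP => // vwL [x_uw_vw]; case: separate.
by rewrite -(x_gen uwL) -(x_gen vwL) x_uw_vw.
Qed.

Lemma factor_eq_of_deltaw_eq (H : nat) (u v : word p) :
  u != [::] -> v != [::] -> inL q u -> inL q v ->
  natval q u = natval q v %[mod q ^ H] -> deltaw delta q0 u = deltaw delta q0 v ->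
  feq (factor q x u H) (factor q x v H).
Proof.
move=> u_nil v_nil uL vL uv_mod uv_state w; rewrite /factor.
case: (leqP (size w) H) => //= w_le.
have uv_dom := inL_cat_eqmod q_gt0 u_nil v_nil uL vL uv_mod w_le.
rewrite -uv_dom; case: ifP => // uwL.
have vwL : inL q (v ++ w) by rewrite -uv_dom.
by rewrite (x_gen uwL) (x_gen vwL) /deltaw !foldl_cat -!/(deltaw _ _ _) uv_state.
Qed.

End DecoratedTree.

Theorem mainTheorem11 (p q : nat) (B Q : finType) (q0 : Q)
    (delta : Q -> 'I_p -> Q) (tau : Q -> B) (x : nat -> B) (h : nat) :
  (1 < q)%N -> (q < p)%N -> coprime p q ->
  generated q q0 delta tau x ->
  aut_property q q0 delta tau h ->
  forall j : nat, (j <= q - 1)%N ->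
  forall U : factorT p B, in_Finf q x h U ->
  forall U1 U2 : factorT p B,
    in_Finf_a q x h.+1 (wj0 p q j) U1 ->
    in_Finf_a q x h.+1 (wj0 p q j) U2 ->
    extends h U U1 -> extends h U U2 ->
    feq U1 U2.
Proof.
move=> q_gt1 q_lt_p pq_coprime x_gen aut j _ U _ U1 U2 [U1_inf U1_least] [U2_inf U2_least].
move=> U1_ext U2_ext; have q_gt0 : (0 < q)%N := ltnW q_gt1.
have [u [uL u_nil u_U1]] := in_Finf_rep U1_inf.
have [v [vL v_nil v_U2]] := in_Finf_rep U2_inf.
have agree w : (size w <= h)%N -> factor q x u h.+1 w = factor q x v h.+1 w.
  by move=> wh; rewrite u_U1 v_U2 U1_ext ?U2_ext.
have [z [zh uzL vzL]] :=
  least_ends_with_common_word q_gt0 q_lt_p pq_coprime u_nil v_nil agree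
  (least_ends_with_feq u_U1 U1_least) (least_ends_with_feq v_U2 U2_least).
have uv_mod : natval q u = natval q v %[mod q ^ h.+1].
  by rewrite -zh; apply: natval_eqmod_of_cat.
have qh_dvd := dvdn_exp2l q (leqnSn h).
have uv_mod_h : natval q u = natval q v %[mod q ^ h].
  by rewrite -(modn_dvdm _ qh_dvd) uv_mod modn_dvdm.
have uv_state := deltaw_eq_of_factor_agree x_gen aut (leqnSn h) uL vL uv_mod_h agree.
move=> w; rewrite -u_U1 -v_U2.
exact: (factor_eq_of_deltaw_eq q_gt0 x_gen u_nil v_nil uL vL uv_mod uv_state w).
Qed.
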